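(* Let $a,b$ be positive integers and $c$ an integer with $-b<c<a$, and suppose that $E_{(-b,c,a)}^{(\infty,\infty,\infty)}=\bigoplus_{r\in\mathbb{Z}}A_r$ is of full support. Then for every monomial $w\in A_r$ there exist infinitely many monomials in $A_r$ with pairwise disjoint supports whose length equals the length of $w$.
   Context: $E$ is the Grassmann algebra of an infinite-dimensional vector space with basis $e_1,e_2,\dots$; monomials are $1$ and $e_{i_1}\cdots e_{i_k}$ with $i_1<\dots<i_k$, of length $k$ and support $\{e_{i_1},\dots,e_{i_k}\}$. For pairwise distinct integers $r_1,r_2,r_3$, $E_{(r_1,r_2,r_3)}^{(\infty,\infty,\infty)}=\bigoplus_rA_r$ is the $\mathbb{Z}$-grading obtained by splitting $\{e_i\}$ into three disjoint infinite sets, giving elements of the $j$-th set degree $r_j$ and monomials the sum of the degrees of their factors ($A_r$ is spanned by the monomials of degree $r$). Full support means $A_r\ne0$ for every $r\in\mathbb{Z}$. *)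

From HB Require Import structures.
From mathcomp Require Import all_boot all_order all_algebra.
From mathcomp Require Import finmap.
Set Implicit Arguments. Unset Strict Implicit. Unset Printing Implicit Defensive.
Import Order.TTheory GRing.Theory Num.Theory.
Local Open Scope ring_scope.
Local Open Scope fset_scope.

(* Generators e_n of the Grassmann algebra are indexed by n : nat.
   A monomial e_{i_1}...e_{i_k} (i_1<...<i_k), or 1, is identified with its
   support {i_1,...,i_k} : {fset nat}; its length is the cardinality.
   The splitting of {e_n} into three disjoint sets is a map
   part : nat -> 'I_3 (e_n lies in the (part n)-th set). *)

Definition infinite_split (part : nat -> 'I_3) : Prop :=
  forall (j : 'I_3) (N : nat), exists n : nat, (N <= n)%N /\ part n = j.

Definition gen_deg (r1 r2 r3 : int) (part : nat -> 'I_3) (n : nat) : int :=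
  nth 0 [:: r1; r2; r3] (part n).

Definition mon_deg (r1 r2 r3 : int) (part : nat -> 'I_3) (w : {fset nat}) : int :=
  \sum_(n <- w) gen_deg r1 r2 r3 part n.

Definition mon_len (w : {fset nat}) : nat := #|` w|.

(* A_r is spanned by monomials of degree r; A_r <> 0 iff such a monomial exists *)
Definition full_support (r1 r2 r3 : int) (part : nat -> 'I_3) : Prop :=
  forall r : int, exists w : {fset nat}, mon_deg r1 r2 r3 part w = r.

From HB Require Import structures.
From mathcomp Require Import all_boot all_order all_algebra.
From mathcomp Require Import finmap.
Set Implicit Arguments. Unset Strict Implicit. Unset Printing Implicit Defensive.
Import Order.TTheory GRing.Theory Num.Theory.
Local Open Scope ring_scope.
Local Open Scope fset_scope.

(* The degree of a monomial only depends on how many of its factors lie in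
   each of the three sets, and each set is infinite.  Hence a monomial can be
   moved to fresh generators of the same sets: enumerating every set
   increasingly and sending generator x of the i-th copy to the
   (pickle (i, x))-th element of the set containing x gives pairwise
   disjoint copies with the same degree and length. *)

Section Relabelling.

Variables (I : eqType) (part : nat -> I).
Hypothesis fibre_unbounded : forall (j : I) (N : nat), exists n, (N <= n)%N /\ part n = j.

Let fibre_unboundedb (j : I) (N : nat) : exists n, (N <= n)%N && (part n == j).
Proof. by have [n [leNn <-]] := fibre_unbounded j N; exists n; rewrite leNn eqxx. Qed.

Definition fibre_next (j : I) (N : nat) : nat := ex_minn (fibre_unboundedb j N).

Lemma fibre_nextP (j : I) (N : nat) : (N <= fibre_next j N)%N /\ part (fibre_next j N) = j.
Proof. by rewrite /fibre_next; case: ex_minnP => n /andP[-> /eqP]. Qed.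

Fixpoint fibre_enum (j : I) (k : nat) : nat :=
  if k is k'.+1 then fibre_next j (fibre_enum j k').+1 else fibre_next j 0.

Lemma part_fibre_enum (j : I) (k : nat) : part (fibre_enum j k) = j.
Proof. by case: k => [|k]; rewrite /= (fibre_nextP _ _).2. Qed.

Lemma fibre_enum_inj (j : I) : injective (fibre_enum j).
Proof.
apply/incn_inj/leq_mono; apply: homo_ltn; first exact: ltn_trans.
by move=> k; exact: (fibre_nextP _ _).1.
Qed.

(* [finmap] shadows [pickle] and [pickleK] by their finite-type versions. *)
Definition relabel (i x : nat) : nat := fibre_enum (part x) (choice.pickle (i, x)).

Lemma part_relabel (i x : nat) : part (relabel i x) = part x.
Proof. exact: part_fibre_enum. Qed.

Lemma relabel_inj (i j x y : nat) : relabel i x = relabel j y -> (i, x) = (j, y).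
Proof.
move=> eq_relabel; have eq_part : part x = part y by rewrite -(part_relabel i) eq_relabel part_relabel.
by move: eq_relabel; rewrite /relabel eq_part => /fibre_enum_inj/(pcan_inj (@choice.pickleK _)).
Qed.

Definition relabel_fset (i : nat) (w : {fset nat}) : {fset nat} := relabel i @` w.

Lemma card_relabel_fset (i : nat) (w : {fset nat}) : #|` relabel_fset i w| = #|` w|.
Proof. by apply/eqP/card_in_imfsetP => x y _ _ /relabel_inj []. Qed.

Lemma big_relabel_fset (V : nmodType) (F : nat -> V) (i : nat) (w : {fset nat}) :
    (forall m n, part m = part n -> F m = F n) ->
  \sum_(n <- relabel_fset i w) F n = \sum_(n <- w) F n.
Proof.
move=> F_part; rewrite big_imfset => [|x y _ _ /relabel_inj [] //].
by apply: eq_bigr => x _; apply: F_part; rewrite part_relabel.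
Qed.

Lemma relabel_fsetI (i j : nat) (v w : {fset nat}) :
  i <> j -> relabel_fset i v `&` relabel_fset j w = fset0.
Proof.
move=> neq_relabel; apply/eqP; rewrite -fsubset0; apply/fsubsetP => z.
by rewrite inE => /andP[/imfsetP [x _ ->] /imfsetP [y _ /relabel_inj [/neq_relabel]]].
Qed.

End Relabelling.

Theorem lemma4p6 (a b c : int) (part : nat -> 'I_3) :
  0 < a -> 0 < b -> - b < c -> c < a ->
  infinite_split part ->
  full_support (- b) c a part ->
  forall (r : int) (w : {fset nat}),
    mon_deg (- b) c a part w = r ->
    exists f : nat -> {fset nat},
      (forall i : nat, mon_deg (- b) c a part (f i) = r /\
                       mon_len (f i) = mon_len w) /\
      (forall i j : nat, i <> j -> f i `&` f j = fset0).
Proof.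
move=> _ _ _ _ split_part _ r w deg_w.
exists (fun i => relabel_fset split_part i w); split=> [i | i j]; last exact: relabel_fsetI.
split; last exact: card_relabel_fset.
by rewrite -deg_w; apply: big_relabel_fset => m n; rewrite /gen_deg => ->.
Qed.
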